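(* Assume (A2) and (A3). For every $\delta>0$, on the event $\{20\bar\Delta_{\widehat g}\le\delta\}$, $$\widehat R_x(\delta)\le C\,\widehat R(\delta)+C\sqrt{\frac{\bar\Delta_{\widehat g}}n},$$ where $C>0$ is an absolute constant. (The statement holds for every realization of $X_1,\dots,X_n,Z_1,\dots,Z_n$.)
   Context: $\mathcal Z\subseteq\mathbb R^r$; $Z$ random in $\mathcal Z$ with law $\rho$; $K$ kernel on $\mathcal Z$ with RKHS $\mathcal H_K$, norm $\|\cdot\|_K$, $K_v=K(v,\cdot)$. (A2) $K$ continuous, symmetric, psd, $\sup K\le\kappa^2<\infty$. (A3) $L_Kf=\int K(z,\cdot)f(z)d\rho(z)=\sum_j\mu_j\langle\phi_j,f\rangle_\rho\phi_j$ with nonincreasing $\mu_j\ge0$, $\mu_1>0$, $\{\phi_j\}$ orthonormal basis of $\mathcal L^2(\rho)$. Given $Z_1,\dots,Z_n\in\mathcal Z$, $X_1,\dots,X_n\in\mathcal X$ and a measurable $\widehat g:\mathcal X\to\mathcal Z$, let $\widehat Z_i=\widehat g(X_i)$. $\mathbf K_x$ ($\mathbf K$) is the $n\times n$ matrix with entries $n^{-1}K(\widehat Z_i,\widehat Z_j)$ ($n^{-1}K(Z_i,Z_j)$), with eigenvalues $\widehat\mu_{x,1}\ge\dots\ge\widehat\mu_{x,n}$ ($\widehat\mu_1\ge\dots\ge\widehat\mu_n$); $\widehat R_x(\delta)=(\frac1n\sum_{j=1}^n\min\{\delta,\widehat\mu_{x,j}\})^{1/2}$, $\widehat R(\delta)=(\frac1n\sum_{j=1}^n\min\{\delta,\widehat\mu_j\})^{1/2}$.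 $\Delta_{i,\widehat g}=\|K_{Z_i}-K_{\widehat Z_i}\|_K^2$ and $\bar\Delta_{\widehat g}=\frac1n\sum_{i=1}^n\Delta_{i,\widehat g}$. *)

From mathcomp Require Import all_boot all_order all_algebra.
From mathcomp Require Import all_classical all_reals all_analysis.
Set Implicit Arguments. Unset Strict Implicit. Unset Printing Implicit Defensive.
Import Order.TTheory GRing.Theory Num.Theory.
Import numFieldNormedType.Exports.
Local Open Scope ring_scope.
Local Open Scope classical_set_scope.

Section Defs.
Variable R : realType.

Definition kernel_A2 (r : nat) (Zs : set 'rV[R]_r)
    (K : 'rV[R]_r -> 'rV[R]_r -> R) (kappa : R) : Prop :=
  [/\ {within Zs `*` Zs, continuous (fun p : 'rV[R]_r * 'rV[R]_r => K p.1 p.2)},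
      (forall u v, Zs u -> Zs v -> K u v = K v u),
      (forall (m : nat) (z : 'I_m -> 'rV[R]_r) (c : 'I_m -> R),
          (forall i, Zs (z i)) ->
          0 <= \sum_(i < m) \sum_(j < m) c i * c j * K (z i) (z j)) &
      (forall u v, Zs u -> Zs v -> K u v <= kappa ^+ 2)].

Definition gram (r n : nat) (K : 'rV[R]_r -> 'rV[R]_r -> R)
    (z : 'I_n -> 'rV[R]_r) : 'M[R]_n :=
  \matrix_(i, j) (n%:R^-1 * K (z i) (z j)).

(* mu is the nonincreasing list of the eigenvalues of A, with multiplicity:
   the characteristic polynomial of A splits as prod_j (X - mu_j). *)
Definition sorted_eigenvalues (n : nat) (A : 'M[R]_n) (mu : 'I_n -> R) : Prop :=
  char_poly A = \prod_(j < n) ('X - (mu j)%:P) /\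
  (forall i j : 'I_n, (i <= j)%N -> mu j <= mu i).

Definition Rhat (n : nat) (mu : 'I_n -> R) (delta : R) : R :=
  Num.sqrt (n%:R^-1 * \sum_(j < n) Num.min delta (mu j)).

(* ||K_u - K_v||_K^2, expanded by the reproducing property
   <K_u, K_v>_K = K(u, v). *)
Definition rkhs_dist2 (r : nat) (K : 'rV[R]_r -> 'rV[R]_r -> R)
    (u v : 'rV[R]_r) : R :=
  K u u - K u v - K v u + K v v.

Definition Delta_bar (r n : nat) (K : 'rV[R]_r -> 'rV[R]_r -> R)
    (z zh : 'I_n -> 'rV[R]_r) : R :=
  n%:R^-1 * \sum_(i < n) rkhs_dist2 K (z i) (zh i).
End Defs.

(* Let A and B be the normalised Gram matrices of the Z_i and of the hat Z_i,
   and E the Gram matrix of the differences K_(Z_i) - K_(hat Z_i), so that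
   tr E = bar Delta and B <= 2 A + 2 E as quadratic forms.  For a positive
   semidefinite S with eigenvalues mu_j, the ridge cost
   tr (V S V^T) + delta ||1 - V||_F^2 is minimal at V = delta (S + delta)^-1,
   with minimum sum_j delta mu_j / (mu_j + delta), which lies between
   (1/2) sum_j min(delta, mu_j) and sum_j min(delta, mu_j).  The ridge cost of B
   at the minimiser for A is at most twice the cost of A plus 4 tr E as soon as
   4 tr E <= delta (implied by 20 bar Delta <= delta).  Hence
   sum_j min(delta, hat mu_(x,j)) <= 4 sum_j min(delta, hat mu_j) + 8 bar Delta,
   and taking square roots gives the bound with C = 3. *)

From mathcomp Require Import all_boot all_order all_algebra.
From mathcomp Require Import all_classical all_reals all_analysis.
From mathcomp Require Import complex ring lra.
Import Order.TTheory GRing.Theory Num.Theory.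
Set Implicit Arguments. Unset Strict Implicit. Unset Printing Implicit Defensive.
Local Open Scope ring_scope.

Section QuadraticForm.
Variables (R : realFieldType) (n : nat).
Implicit Types (S : 'M[R]_n) (c w x y : 'I_n -> R).

Definition qform S c := \sum_i \sum_j c i * c j * S i j.

Definition psdmx S := forall c, 0 <= qform S c.

Lemma qformD S1 S2 c : qform (S1 + S2) c = qform S1 c + qform S2 c.
Proof.
rewrite /qform -big_split; apply: eq_bigr => i _; rewrite -big_split.
by apply: eq_bigr => j _; rewrite mxE mulrDr.
Qed.

Lemma qform_scalar a c : qform a%:M c = a * \sum_i c i ^+ 2.
Proof.
rewrite /qform mulr_sumr; apply: eq_bigr => i _.
rewrite (bigD1 i) //= big1 => [|j /negbTE ji]; last by rewrite mxE eq_sym ji mulr0n mulr0.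
by rewrite mxE eqxx mulr1n addr0 expr2 mulrC.
Qed.

Lemma qform_delta S i : qform S (fun k => (k == i)%:R) = S i i.
Proof.
rewrite /qform (bigD1 i) //= [X in _ + X]big1 => [|k /negbTE ki]; last first.
  by apply: big1 => j _; rewrite ki !mul0r.
rewrite (bigD1 i) //= big1 => [|j /negbTE ji]; last by rewrite ji mulr0 mul0r.
by rewrite eqxx !mul1r !addr0.
Qed.

Lemma psdmx_qformB_le S x y : psdmx S ->
  qform S (fun k => x k - y k) <= 2 * qform S x + 2 * qform S y.
Proof.
move=> psdS; have := psdS (fun k => x k + y k).
suff -> : qform S (fun k => x k + y k) =
  2 * qform S x + 2 * qform S y - qform S (fun k => x k - y k) by rewrite subr_ge0.
rewrite /qform !mulr_sumr -big_split -sumrB; apply: eq_bigr => i _ /=.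
rewrite !mulr_sumr -big_split -sumrB; apply: eq_bigr => j _ /=; ring.
Qed.

Lemma psdmx_mxtrace_ge0 S : psdmx S -> 0 <= \tr S.
Proof. by move=> psdS; apply: sumr_ge0 => i _; rewrite -qform_delta. Qed.

Lemma mxtrace_qform (V S : 'M[R]_n) :
  \tr (V *m S *m V^T) = \sum_k qform S (fun i => V k i).
Proof.
apply: eq_bigr => k _; rewrite /qform mxE exchange_big /=; apply: eq_bigr => j _.
by rewrite !mxE mulr_suml; apply: eq_bigr => i _; ring.
Qed.

Lemma qform_pair S i j s t :
  qform S (fun k => s * (k == i)%:R + t * (k == j)%:R) =
  s ^+ 2 * S i i + s * t * (S i j + S j i) + t ^+ 2 * S j j.
Proof.
have pick F : \sum_k (s * (k == i)%:R + t * (k == j)%:R) * F k = s * F i + t * F j.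
  have delta l : \sum_k (k == l)%:R * F k = F l.
    by rewrite (bigD1 l) //= eqxx mul1r big1 ?addr0 // => k /negbTE ->; rewrite mul0r.
  rewrite -(delta i) -(delta j) !mulr_sumr -big_split.
  by apply: eq_bigr => k _ /=; ring.
rewrite /qform (eq_bigr (fun k => (s * (k == i)%:R + t * (k == j)%:R) *
  (s * S k i + t * S k j))) => [|k _]; first by rewrite pick; ring.
by rewrite -pick mulr_sumr; apply: eq_bigr => l _; ring.
Qed.

Lemma psdmx_qform_le_mxtrace S w : psdmx S -> qform S w <= (\sum_i w i ^+ 2) * \tr S.
Proof.
move=> psdS.
have pair_le i j : w i * w j * (S i j + S j i) <= w j ^+ 2 * S i i + w i ^+ 2 * S j j.
  have := psdS (fun k => w j * (k == i)%:R + - w i * (k == j)%:R).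
  by rewrite qform_pair; nra.
have lhs : \sum_i \sum_j w i * w j * (S i j + S j i) = 2 * qform S w.
  rewrite mulr_natl mulr2n /qform; under eq_bigr do under eq_bigr do rewrite mulrDr.
  under eq_bigr do rewrite big_split /=; rewrite big_split /=; congr (_ + _).
  rewrite exchange_big; apply: eq_bigr => i _; apply: eq_bigr => j _ /=.
  by rewrite (mulrC (w j)).
have rhs : \sum_i \sum_j (w j ^+ 2 * S i i + w i ^+ 2 * S j j) =
    2 * ((\sum_i w i ^+ 2) * \tr S).
  rewrite mulr_natl mulr2n; under eq_bigr do rewrite big_split /=; rewrite big_split /=.
  congr (_ + _); first by under eq_bigr do rewrite -mulr_suml; rewrite -mulr_sumr.
  by under eq_bigr do rewrite -mulr_sumr; rewrite -mulr_suml.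
rewrite -(ler_pM2l (_ : 0 < 2 :> R)) // -lhs -rhs.
by apply: ler_sum => i _; apply: ler_sum => j _.
Qed.

End QuadraticForm.

Section RidgeCost.
Variables (R : realFieldType) (n : nat) (dl : R).
Implicit Types (S V : 'M[R]_n).

Definition ridge_cost S V :=
  \tr (V *m S *m V^T) + dl * \tr ((1%:M - V) *m (1%:M - V)^T).

Definition ridge_min S := dl * n%:R - dl ^+ 2 * \tr (invmx (S + dl%:M)).

Definition ridge_argmin S := dl *: invmx (S + dl%:M).

Lemma ridge_costE S V : S^T = S -> S + dl%:M \in unitmx ->
  ridge_cost S V = ridge_min S +
    \tr ((V - ridge_argmin S) *m (S + dl%:M) *m (V - ridge_argmin S)^T).
Proof.
move=> symS unitT; rewrite /ridge_argmin; set W := V - _.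
set T := S + dl%:M in unitT W *; set U := invmx T in W *.
have symU : U^T = U by rewrite /U trmx_inv linearD /= symS tr_scalar_mx.
have trX : \tr ((1%:M - V) *m (1%:M - V)^T) = n%:R - 2 * \tr V + \tr (V *m V^T).
  rewrite linearB /= trmx1 mulmxBl !mulmxBr !mul1mx mulmx1.
  by rewrite !raddfB /= mxtrace_tr mxtrace1; ring.
have trW : \tr (W *m T *m W^T) =
    \tr (V *m S *m V^T) + dl * \tr (V *m V^T) - 2 * dl * \tr V + dl ^+ 2 * \tr U.
  have -> : W^T = V^T - dl *: U by rewrite /W linearB linearZ /= symU.
  rewrite /W mulmxBl -scalemxAl mulVmx // scalemx1 mulmxBl !mulmxBr.
  rewrite -!scalemxAr -(mulmxA V T U) mulmxV // mulmx1 !mul_scalar_mx scalerA.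
  rewrite /T mulmxDr mulmxDl mul_mx_scalar -scalemxAl.
  by rewrite !raddfB /= !raddfD /= !mxtraceZ mxtrace_tr; ring.
by rewrite /ridge_cost /ridge_min trX trW /U /T; ring.
Qed.

Lemma ridge_min_le S V : S^T = S -> psdmx S -> 0 < dl -> S + dl%:M \in unitmx ->
  ridge_min S <= ridge_cost S V.
Proof.
move=> symS psdS dl_gt0 unitT; rewrite ridge_costE // lerDl mxtrace_qform.
rewrite sumr_ge0 // => k _; rewrite qformD qform_scalar addr_ge0 //.
apply: mulr_ge0; first exact: ltW.
by rewrite sumr_ge0 // => i _; rewrite sqr_ge0.
Qed.

Lemma ridge_cost_argmin S : S^T = S -> S + dl%:M \in unitmx ->
  ridge_cost S (ridge_argmin S) = ridge_min S.
Proof. by move=> symS unitT; rewrite ridge_costE // subrr !mul0mx mxtrace0 addr0. Qed.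

Lemma ridge_cost_perturb A B E V : psdmx E ->
  (forall c, qform B c <= 2 * qform A c + 2 * qform E c) -> 4 * \tr E <= dl ->
  ridge_cost B V <= 2 * ridge_cost A V + 4 * \tr E.
Proof.
(* Row k of V is e_k - X_k with X := 1 - V; the part of the E-cost carried by X
   is at most 4 tr E * ||X||^2 and is absorbed by the ridge penalty. *)
move=> psdE leB leE; set X := 1%:M - V.
pose s k := \sum_i X k i ^+ 2.
have rowV k : (fun i => V k i) = (fun i => (i == k)%:R - X k i).
  by apply: funext => i; rewrite !mxE eq_sym; ring.
have row_le k : qform B (fun i => V k i) <=
    2 * qform A (fun i => V k i) + 4 * E k k + 4 * (s k * \tr E).
  have leE_k : qform E (fun i => V k i) <= 2 * E k k + 2 * (s k * \tr E).
    rewrite rowV; apply: le_trans (psdmx_qformB_le _ _ psdE) _.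
    by rewrite qform_delta lerD2l ler_pM2l // psdmx_qform_le_mxtrace.
  by have := leB (fun i => V k i); lra.
have trX : \tr (X *m X^T) = \sum_k s k.
  rewrite -[X in X *m _]mulmx1 mxtrace_qform.
  by apply: eq_bigr => k _; rewrite qform_scalar mul1r.
have s_ge0 : 0 <= \sum_k s k.
  by apply: sumr_ge0 => k _; apply: sumr_ge0 => i _; exact: sqr_ge0.
have trB : \tr (V *m B *m V^T) <=
    2 * \tr (V *m A *m V^T) + 4 * \tr E + 4 * ((\sum_k s k) * \tr E).
  rewrite !mxtrace_qform; apply: le_trans (ler_sum _ (fun k _ => row_le k)) _.
  by rewrite !big_split /= -!mulr_sumr -mulr_suml.
have := ler_wpM2r s_ge0 leE.
by rewrite /ridge_cost -/X trX; nra.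
Qed.

End RidgeCost.

Lemma char_poly_conj (F : fieldType) n (P A : 'M[F]_n) : P \in unitmx ->
  char_poly (invmx P *m A *m P) = char_poly A.
Proof.
move=> unitP; rewrite /char_poly /char_poly_mx !map_mxM.
set iP := map_mx polyC (invmx P); set mP := map_mx polyC P.
have iPP : iP *m mP = 1%:M by rewrite -map_mxM mulVmx // map_mx1.
have -> : 'X%:M - iP *m map_mx polyC A *m mP = iP *m ('X%:M - map_mx polyC A) *m mP.
  by rewrite mulmxBr mulmxBl mul_mx_scalar -scalemxAl iPP -mul_mx_scalar mul1mx.
by rewrite !det_mulmx mulrAC -det_mulmx iPP det1 mul1r.
Qed.

Lemma invmx_conj (F : fieldType) n (P A : 'M[F]_n) : P \in unitmx ->
  invmx (invmx P *m A *m P) = invmx P *m invmx A *m P.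
Proof.
move=> unitP; have [unitA|nunitA] := boolP (A \in unitmx); last first.
  have nunitPAP : invmx P *m A *m P \notin unitmx.
    by rewrite !unitmx_mul unitmx_inv unitP andbT.
  by rewrite (invmx_out nunitA) (invmx_out nunitPAP).
have inv : invmx P *m A *m P *m (invmx P *m invmx A *m P) = 1%:M.
  by rewrite !mulmxA mulmxK // mulmxK // mulVmx.
have [unitPAP _] := mulmx1_unit inv.
by rewrite -[LHS]mulmx1 -inv mulKmx.
Qed.

Lemma invmx_diag (F : fieldType) n (e : 'rV[F]_n) : (forall i, e 0 i != 0) ->
  invmx (diag_mx e) = diag_mx (map_mx GRing.inv e).
Proof.
move=> e_neq0.
have inv : diag_mx (map_mx GRing.inv e) *m diag_mx e = 1%:M.
  apply/matrixP => i j; rewrite mul_diag_mx !mxE.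
  by case: (i == j); rewrite ?mulr1n ?mulr0n ?mulr0 ?mulVf.
have unite : diag_mx e \in unitmx.
  by rewrite unitmxE det_diag unitfE; apply/prodf_neq0 => i _.
by rewrite -[LHS]mul1mx -inv mulmxK.
Qed.

Lemma normalmx_resolvent (C : numClosedFieldType) n (A : 'M[C]_n) (a : 'I_n -> C) t :
  A \is normalmx -> char_poly A = \prod_(j < n) ('X - (a j)%:P) ->
  (forall j, a j + t != 0) ->
  A + t%:M \in unitmx /\ \tr (invmx (A + t%:M)) = \sum_(j < n) (a j + t)^-1.
Proof.
move=> /orthomx_spectralP eA charA at_neq0.
set P := spectralmx A in eA; set d := spectral_diag A in eA.
have unitP : P \in unitmx := spectral_unit A.
have perm_d : perm_eq [seq d 0 i | i <- index_enum 'I_n] [seq a j | j <- index_enum 'I_n].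
  apply: prod_XsubC_eq; rewrite !big_map -charA eA char_poly_conj //.
  by rewrite char_poly_trig ?diag_mx_is_trig //; apply: eq_bigr => i _; rewrite mxE eqxx.
pose e := \row_i (d 0 i + t).
have e_neq0 i : e 0 i != 0.
  have : d 0 i \in [seq a j | j <- index_enum 'I_n].
    by rewrite -(perm_mem perm_d) map_f ?mem_index_enum.
  by rewrite mxE => /mapP[j _ ->].
have eAt : A + t%:M = invmx P *m diag_mx e *m P.
  have -> : diag_mx e = diag_mx d + t%:M.
    by apply/matrixP => i j; rewrite !mxE; case: eqP => _; rewrite ?mulr1n ?mulr0n ?addr0.
  by rewrite mulmxDr mulmxDl -eA mul_mx_scalar -scalemxAl mulVmx // scalemx1.
have unite : diag_mx e \in unitmx.
  by rewrite unitmxE det_diag unitfE; apply/prodf_neq0 => i _.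
split; first by rewrite eAt !unitmx_mul unitmx_inv unitP unite.
rewrite eAt invmx_conj // -mulmxA mxtrace_mulC mulmxK // invmx_diag // mxtrace_diag.
under eq_bigr do rewrite !mxE.
rewrite -(big_map (fun i => d 0 i) xpredT (fun x => (x + t)^-1)) (perm_big _ perm_d).
by rewrite big_map.
Qed.

Lemma symmetric_resolvent (R : rcfType) n (S : 'M[R]_n) (mu : 'I_n -> R) t :
  S^T = S -> char_poly S = \prod_(j < n) ('X - (mu j)%:P) ->
  (forall j, mu j + t != 0) ->
  S + t%:M \in unitmx /\ \tr (invmx (S + t%:M)) = \sum_(j < n) (mu j + t)^-1.
Proof.
move=> symS charS mut_neq0; pose f := real_complex R.
have normSc : map_mx f S \is normalmx.
  apply: symmetric_normalmx.
    by apply/is_hermitianmxP; rewrite expr0 scale1r map_mx_id // map_trmx symS.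
  apply/mxOverP => i j; rewrite mxE.
  by rewrite realE -(rmorph0 f) !lecR -realE num_real.
have charSc : char_poly (map_mx f S) = \prod_(j < n) ('X - (f (mu j))%:P).
  rewrite -map_char_poly charS rmorph_prod.
  by apply: eq_bigr => j _; exact: map_polyXsubC.
have [|unitSc trSc] := normalmx_resolvent (t := f t) normSc charSc.
  by move=> j; rewrite -rmorphD fmorph_eq0.
have mapSt : map_mx f (S + t%:M) = map_mx f S + (f t)%:M.
  by rewrite map_mxD map_scalar_mx.
have unitSt : S + t%:M \in unitmx by rewrite -(map_unitmx f) mapSt.
split=> //; apply: (fmorph_inj f).
rewrite -trace_map_mx map_invmx mapSt trSc rmorph_sum.
by apply: eq_bigr => j _; rewrite fmorphV rmorphD.
Qed.

Lemma eigenvalue_prod_XsubC (F : fieldType) n (S : 'M[F]_n) (mu : 'I_n -> F) j :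
  char_poly S = \prod_(i < n) ('X - (mu i)%:P) -> eigenvalue S (mu j).
Proof.
move=> charS; rewrite eigenvalue_root_char charS; apply/rootP.
by rewrite horner_prod (bigD1 j) //= hornerXsubC subrr mul0r.
Qed.

Lemma psdmx_eigenvalue_ge0 (R : realFieldType) n (S : 'M[R]_n) a :
  psdmx S -> eigenvalue S a -> 0 <= a.
Proof.
move=> psdS /eigenvalueP[v eigv v_neq0].
have qv : qform S (fun i => v 0 i) = a * \sum_i v 0 i ^+ 2.
  rewrite /qform exchange_big /= mulr_sumr; apply: eq_bigr => k _.
  have := congr1 (fun M : 'rV_n => M 0 k) eigv; rewrite !mxE => eigv_k.
  transitivity (v 0 k * \sum_i v 0 i * S i k); last by rewrite eigv_k expr2 mulrCA.
  by rewrite mulr_sumr; apply: eq_bigr => i _; rewrite mulrCA mulrA.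
have v_norm_gt0 : 0 < \sum_i v 0 i ^+ 2.
  rewrite lt_def sumr_ge0 ?andbT => [|i _]; last exact: sqr_ge0.
  apply: contra v_neq0 => /eqP v_norm0; apply/eqP/rowP => i; rewrite mxE.
  apply/eqP; rewrite -sqrf_eq0; apply/eqP.
  by apply: (psumr_eq0P _ v_norm0) => // k _; rewrite sqr_ge0.
by rewrite -(pmulr_lge0 _ v_norm_gt0) -qv.
Qed.

Lemma ridge_min_eigen (R : rcfType) n (S : 'M[R]_n) (mu : 'I_n -> R) dl :
  S^T = S -> psdmx S -> char_poly S = \prod_(j < n) ('X - (mu j)%:P) -> 0 < dl ->
  S + dl%:M \in unitmx /\ ridge_min dl S = \sum_(j < n) (dl - dl ^+ 2 / (mu j + dl)).
Proof.
move=> symS psdS charS dl_gt0.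
have mu_ge0 j := psdmx_eigenvalue_ge0 psdS (eigenvalue_prod_XsubC j charS).
have [|unitS trS] := symmetric_resolvent (t := dl) symS charS.
  by move=> j; rewrite gt_eqF // ltr_wpDl.
by split=> //; rewrite /ridge_min trS sumrB sumr_const card_ord mulr_natr mulr_sumr.
Qed.

Lemma min_shrink_bounds (R : realFieldType) (dl m : R) : 0 < dl -> 0 <= m ->
  dl - dl ^+ 2 / (m + dl) <= Num.min dl m <= 2 * (dl - dl ^+ 2 / (m + dl)).
Proof.
move=> dl_gt0 m_ge0; set q := (m + dl)^-1.
have q_gt0 : 0 < q by rewrite invr_gt0; lra.
have qE : q * (m + dl) = 1 by rewrite mulVf // lt0r_neq0 //; lra.
have dq_gt0 : 0 < dl * q by rewrite mulr_gt0.
have mq_ge0 : 0 <= m * q by rewrite mulr_ge0 // ltW.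
have -> : dl - dl ^+ 2 / (m + dl) = dl * (m * q).
  by rewrite -{1}[dl]mulr1 -qE /q; ring.
by rewrite /Num.min; case: ltP => dlm; apply/andP; split; nra.
Qed.

Lemma sum_min_eigen_perturb (R : rcfType) n (A B E : 'M[R]_n) (mu mux : 'I_n -> R) dl :
  A^T = A -> B^T = B -> psdmx A -> psdmx B -> psdmx E ->
  (forall c, qform B c <= 2 * qform A c + 2 * qform E c) ->
  char_poly A = \prod_(j < n) ('X - (mu j)%:P) ->
  char_poly B = \prod_(j < n) ('X - (mux j)%:P) ->
  0 < dl -> 4 * \tr E <= dl ->
  \sum_(j < n) Num.min dl (mux j) <= 4 * \sum_(j < n) Num.min dl (mu j) + 8 * \tr E.
Proof.
move=> symA symB psdA psdB psdE leB charA charB dl_gt0 leE.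
have [unitA minA] := ridge_min_eigen symA psdA charA dl_gt0.
have [unitB minB] := ridge_min_eigen symB psdB charB dl_gt0.
have le_min : ridge_min dl B <= 2 * ridge_min dl A + 4 * \tr E.
  rewrite -(ridge_cost_argmin symA unitA).
  apply: le_trans (ridge_cost_perturb _ psdE leB leE).
  exact: ridge_min_le.
have sumB : \sum_j Num.min dl (mux j) <= 2 * ridge_min dl B.
  rewrite minB mulr_sumr; apply: ler_sum => j _.
  by case/andP: (min_shrink_bounds dl_gt0 
    (psdmx_eigenvalue_ge0 psdB (eigenvalue_prod_XsubC j charB))).
have sumA : ridge_min dl A <= \sum_j Num.min dl (mu j).
  rewrite minA; apply: ler_sum => j _.
  by case/andP: (min_shrink_bounds dl_gt0 
    (psdmx_eigenvalue_ge0 psdA (eigenvalue_prod_XsubC j charA))).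
lra.
Qed.

Section GramMatrices.
Variables (R : realType) (r n : nat) (Zs : set 'rV[R]_r).
Variables (K : 'rV[R]_r -> 'rV[R]_r -> R) (z zh : 'I_n -> 'rV[R]_r).
Hypothesis K_psd : forall (m : nat) (w : 'I_m -> 'rV[R]_r) (c : 'I_m -> R),
  (forall i, Zs (w i)) -> 0 <= \sum_(i < m) \sum_(j < m) c i * c j * K (w i) (w j).
Hypothesis K_sym : forall u v, Zs u -> Zs v -> K u v = K v u.
Hypotheses (z_in : forall i, Zs (z i)) (zh_in : forall i, Zs (zh i)).

(* The squared RKHS norm of [sum_i a_i K_(z i) + b_i K_(zh i)]. *)
Definition comb_norm2 (a b : 'I_n -> R) := \sum_(i < n) \sum_(j < n)
  (a i * a j * K (z i) (z j) + a i * b j * K (z i) (zh j)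
   + b i * a j * K (zh i) (z j) + b i * b j * K (zh i) (zh j)).

Lemma comb_norm2_ge0 a b : 0 <= comb_norm2 a b.
Proof.
pose w k := match fintype.split k with inl i => z i | inr i => zh i end.
pose c k := match fintype.split k with inl i => a i | inr i => b i end.
have w_in k : Zs (w k) by rewrite /w; case: fintype.split.
suff -> : comb_norm2 a b = \sum_k \sum_l c k * c l * K (w k) (w l) by exact: K_psd.
have splitl i : fintype.split (lshift n i) = inl i := unsplitK (inl i).
have splitr i : fintype.split (rshift n i) = inr i := unsplitK (inr i).
under eq_bigr do rewrite big_split_ord /=.
rewrite big_split_ord /=.
rewrite /comb_norm2; under [LHS]eq_bigr do rewrite !big_split /=.
rewrite !big_split /= !addrA; congr (_ + _ + _ + _).
all: by apply: eq_bigr => i _; apply: eq_bigr => j _; rewrite /w /c ?splitl ?splitr.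
Qed.

Lemma qform_gram (w : 'I_n -> 'rV[R]_r) c :
  qform (gram K w) c = n%:R^-1 * \sum_i \sum_j c i * c j * K (w i) (w j).
Proof.
rewrite mulr_sumr; apply: eq_bigr => i _; rewrite mulr_sumr.
by apply: eq_bigr => j _; rewrite mxE mulrCA.
Qed.

Lemma gram_psd (w : 'I_n -> 'rV[R]_r) : (forall i, Zs (w i)) -> psdmx (gram K w).
Proof. by move=> w_in c; rewrite qform_gram mulr_ge0 ?invr_ge0 ?K_psd. Qed.

Lemma trmx_gram (w : 'I_n -> 'rV[R]_r) : (forall i, Zs (w i)) -> (gram K w)^T = gram K w.
Proof. by move=> w_in; apply/matrixP => i j; rewrite !mxE K_sym. Qed.

Definition gram_diff : 'M[R]_n := \matrix_(i, j)
  (n%:R^-1 * (K (z i) (z j) - K (z i) (zh j) - K (zh i) (z j) + K (zh i) (zh j))).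

Lemma mxtrace_gram_diff : \tr gram_diff = Delta_bar K z zh.
Proof. by rewrite /Delta_bar mulr_sumr; apply: eq_bigr => i _; rewrite mxE. Qed.

Lemma gram_diff_psd : psdmx gram_diff.
Proof.
move=> c; suff -> : qform gram_diff c = n%:R^-1 * comb_norm2 c (fun i => - c i).
  by rewrite mulr_ge0 ?invr_ge0 ?comb_norm2_ge0.
rewrite mulr_sumr; apply: eq_bigr => i _; rewrite mulr_sumr.
by apply: eq_bigr => j _; rewrite mxE; ring.
Qed.

Lemma qform_gram_le c :
  qform (gram K zh) c <= 2 * qform (gram K z) c + 2 * qform gram_diff c.
Proof.
rewrite -subr_ge0.
suff -> : 2 * qform (gram K z) c + 2 * qform gram_diff c - qform (gram K zh) c =
    n%:R^-1 * comb_norm2 (fun i => 2 * c i) (fun i => - c i).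
  by rewrite mulr_ge0 ?invr_ge0 ?comb_norm2_ge0.
rewrite !qform_gram /qform !mulr_sumr -!big_split -sumrB.
apply: eq_bigr => i _; rewrite !mulr_sumr -!big_split -sumrB /=.
by apply: eq_bigr => j _; rewrite mxE; ring.
Qed.

End GramMatrices.

Lemma sqrtr_comb_le (R : rcfType) (a b : R) : 0 <= a -> 0 <= b ->
  Num.sqrt (4 * a + 8 * b) <= 3 * Num.sqrt a + 3 * Num.sqrt b.
Proof.
move=> a_ge0 b_ge0; have sa := sqrtr_ge0 a; have sb := sqrtr_ge0 b.
rewrite -[X in _ <= X]ger0_norm -?sqrtr_sqr; last lra.
apply: ler_wsqrtr; rewrite -{1}(sqr_sqrtr a_ge0) -{1}(sqr_sqrtr b_ge0).
by have := mulr_ge0 sa sb; nra.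
Qed.

Lemma Rhat_perturb (R : realType) n (mu mux : 'I_n -> R) delta D :
  0 <= D -> 0 <= \sum_(j < n) Num.min delta (mu j) ->
  \sum_(j < n) Num.min delta (mux j) <= 4 * \sum_(j < n) Num.min delta (mu j) + 8 * D ->
  Rhat mux delta <= 3 * Rhat mu delta + 3 * Num.sqrt (D / n%:R).
Proof.
move=> D_ge0 SA_ge0 le_sum; rewrite /Rhat.
apply: le_trans (sqrtr_comb_le _ _); last first.
- by rewrite divr_ge0.
- by rewrite mulr_ge0 ?invr_ge0.
apply: ler_wsqrtr; rewrite [leRHS](_ : _ = n%:R^-1 *
  (4 * \sum_j Num.min delta (mu j) + 8 * D)); last by ring.
by rewrite ler_wpM2l ?invr_ge0.
Qed.

Theorem lemma11 :
  exists C : nat, (0 < C)%N /\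
  forall (R : realType) (r : nat) (Zs : set 'rV[R]_r)
    (K : 'rV[R]_r -> 'rV[R]_r -> R) (kappa : R)
    (Xt : Type) (n : nat)
    (Z : 'I_n -> 'rV[R]_r) (X : 'I_n -> Xt) (g : Xt -> 'rV[R]_r)
    (mu mux : 'I_n -> R) (delta : R),
    kernel_A2 Zs K kappa ->
    (0 < n)%N ->
    (forall i, Zs (Z i)) ->
    (forall x, Zs (g x)) ->
    sorted_eigenvalues (gram K Z) mu ->
    sorted_eigenvalues (gram K (fun i => g (X i))) mux ->
    0 < delta ->
    20 * Delta_bar K Z (fun i => g (X i)) <= delta ->
    Rhat mux delta <=
      C%:R * Rhat mu delta
      + C%:R * Num.sqrt (Delta_bar K Z (fun i => g (X i)) / n%:R).
Proof.
exists 3%N; split=> // R r Zs K kappa Xt n Z X g mu mux delta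
  [_ K_sym K_psd _] _ Z_in g_in [charA _] [charB _] delta_gt0 small_D.
set Zh := fun i => g (X i) in small_D charB *.
have Zh_in i : Zs (Zh i) := g_in (X i).
have psdA := gram_psd K_psd Z_in.
have psdE := gram_diff_psd K_psd Z_in Zh_in.
have D_ge0 : 0 <= Delta_bar K Z Zh by rewrite -mxtrace_gram_diff psdmx_mxtrace_ge0.
apply: Rhat_perturb D_ge0 _ _.
  rewrite sumr_ge0 // => j _; rewrite le_min ltW //.
  exact: psdmx_eigenvalue_ge0 psdA (eigenvalue_prod_XsubC j charA).
rewrite -mxtrace_gram_diff.
apply: (sum_min_eigen_perturb (trmx_gram K_sym Z_in) (trmx_gram K_sym Zh_in)
  psdA (gram_psd K_psd Zh_in) psdE (qform_gram_le K_psd Z_in Zh_in)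
  charA charB delta_gt0).
by rewrite mxtrace_gram_diff; lra.
Qed.
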